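(* Let $(\Omega,\mathcal F)$ be a measurable space with $\Sigma\neq\emptyset$, and let $v:\mathcal F\to\mathbb R$ be a non-decreasing continuous set function with $v(\emptyset)=0$. Let $f_n:\Omega\to\mathbb R$ ($n\in\mathbb N$) and $f:\Omega\to\mathbb R$ be measurable and Choquet integrable with respect to $v$, such that $f_n$ is pointwise non-decreasing in $n$ and $f=\lim_n f_n$ $v$-almost surely. Then $\lim_{n\to\infty}v(f_n)=v(f)$.
   Context: $\Sigma$ denotes the set of all classes $\mathcal I\subset\mathcal F$ that are chains (totally ordered by inclusion), contain $\emptyset$ and $\Omega$, and generate $\mathcal F$ as a $\sigma$-algebra. $v$ is non-decreasing if $v(A)\le v(B)$ for $A\subset B$. For $\mathcal I\in\Sigma$ let $\mathcal J$ be the algebra generated by $\mathcal I$, whose elements are the sets $\bigcup_{i=1}^n (C_i\cap D_i^c)$ with $C_1\supset D_1\supset\cdots\supset C_n\supset D_n$ in $\mathcal I$; define $\mu_{v,\mathcal I}(\bigcup_{i=1}^n (C_i\cap D_i^c))=\sum_{i=1}^n(v(C_i)-v(D_i))$. $v$ is continuous if for every $\mathcal I\in\Sigma$ this $\mu_{v,\mathcal I}$ is $\sigma$-additive on $\mathcal J$. The Choquet integral of a measurable $f$ is $v(f)=\lim_{y\to-\infty}\big(y\,v(\Omega)+\int_y^\infty v(\{\omega: f(\omega)>z\})\,dz\big)$ (Lebesgue integral), and $f$ is Choquet integrable if this is a well-defined real number. A set $N\in\mathcal F$ is $v$-null if $v(N\cup A)=v(N^c\cap A)=v(A)$ for all $A\in\mathcal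 F$; $f=\lim f_n$ $v$-almost surely means there is a $v$-null $N$ with $\lim f_n(\omega)=f(\omega)$ for all $\omega\in N^c$. *)

From mathcomp Require Import all_boot all_order all_algebra.
From mathcomp Require Import all_classical all_reals all_analysis.
Set Implicit Arguments. Unset Strict Implicit. Unset Printing Implicit Defensive.
Import Order.TTheory GRing.Theory Num.Theory.
Import numFieldNormedType.Exports.
Local Open Scope classical_set_scope.
Local Open Scope ring_scope.

Section Choquet.
Context (d : measure_display) (T : measurableType d) (R : realType).
Implicit Types (v : set T -> R) (I : set (set T)).

Definition nondecreasing_sf v : Prop :=
  forall A B : set T, measurable A -> measurable B -> A `<=` B -> v A <= v B.

Definition in_Sigma I : Prop :=
  [/\ I `<=` measurable,
      (forall A B, I A -> I B -> A `<=` B \/ B `<=` A),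
      I set0, I setT & <<s I>> = @measurable d T].

Definition chain_rep v I (A : set T) (x : R) : Prop :=
  exists (n : nat) (C D : nat -> set T),
    [/\ (forall i, (i < n)%N -> I (C i) /\ I (D i)),
        (forall i, (i < n)%N -> D i `<=` C i),
        (forall i, (i.+1 < n)%N -> C i.+1 `<=` D i),
        A = \bigcup_(i in [set k | (k < n)%N]) (C i `\` D i) &
        x = \sum_(i < n) (v (C i) - v (D i))].

(* membership in the algebra J generated by I *)
Definition in_J I (A : set T) : Prop := exists x, chain_rep (fun _ => 0) I A x.

(* v continuous: for every I in Sigma, mu_{v,I} is sigma-additive on J *)
Definition continuous_sf v : Prop :=
  forall I, in_Sigma I ->
  forall (A : nat -> set T) (x : nat -> R) (y : R),
    (forall k, in_J I (A k)) ->
    trivIset setT A ->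
    in_J I (\bigcup_k A k) ->
    (forall k, chain_rep v I (A k) (x k)) ->
    chain_rep v I (\bigcup_k A k) y ->
    (\sum_(k < n) x k) @[n --> \oo] --> y.

Definition choquet v (f : T -> R) (l : R) : Prop :=
  ((y * v setT)%:E
     + \int[lebesgue_measure]_(z in `[y, +oo[) (v [set w | z < f w])%:E)%E
    @[y --> -oo] --> l%:E.

Definition vnull v (N : set T) : Prop :=
  measurable N /\
  forall A, measurable A -> v (N `|` A) = v A /\ v (~` N `&` A) = v A.

End Choquet.

From mathcomp Require Import all_boot all_order all_algebra.
From mathcomp Require Import all_classical all_reals all_analysis measurable_realfun.
Set Implicit Arguments. Unset Strict Implicit. Unset Printing Implicit Defensive.
Import Order.TTheory GRing.Theory Num.Theory.
Import numFieldNormedType.Exports.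
Local Open Scope classical_set_scope.
Local Open Scope ring_scope.

(* Write G_h(z) := v{h > z}.  By definition the Choquet integral of h is the
   limit, as y -> -oo, of y v(Omega) + \int_y^oo G_h; hence for f_0 <= g the
   difference v(g) - v(f_0) is the Lebesgue integral over R of the
   nonnegative function G_g - G_f0.  Continuity of v gives continuity from
   below along increasing measurable sets: splice a chain of Sigma into the
   gaps of E_0 = 0 <= E_1 <= ... <= \bigcup E_k and apply sigma-additivity of
   mu_{v,I} to the layers E_(k+1) \ E_k.  Off the null set, {f_n > z}
   increases to {f > z}, so G_fn increases pointwise to G_f, and the monotone
   convergence theorem yields v(f_n) - v(f_0) -> v(f) - v(f_0). *)

Lemma cvg_subr_cst {T : Type} {F : set_system T} {FF : Filter F} (K : numFieldType)
    (u : T -> K) a b :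
  u x - b @[x --> F] --> a - b -> u x @[x --> F] --> a.
Proof.
move=> h; rewrite -(subrK b a).
have -> : u = (fun x => u x - b) + cst b by apply/funext => x /=; rewrite subrK.
exact: cvgD h (cvg_cst b).
Qed.

Lemma bigcup_setD_succ {T : Type} (E : (set T)^nat) : E 0%N = set0 ->
  \bigcup_k (E k.+1 `\` E k) = \bigcup_k E k.
Proof.
move=> E0; apply/seteqP; split=> [w [k _ [Ew _]]|w [m _]]; first by exists k.+1.
elim: m => [|m IHm] Emw; first by rewrite E0 in Emw.
by have [/IHm|?] := pselect (E m w); last by exists m.
Qed.

Lemma trivIset_setD_succ {T : Type} (E : (set T)^nat) : nondecreasing_seq E ->
  trivIset setT (fun k => E k.+1 `\` E k).
Proof.
move=> ndE i j _ _ [w [[Eiw Niw] [Ejw Njw]]].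
have [ij|ji|//] := ltngtP i j; exfalso.
  by apply: Njw; move: (ndE _ _ ij); rewrite subsetEset; apply.
by apply: Niw; move: (ndE _ _ ji); rewrite subsetEset; apply.
Qed.

Section chain_rep.
Context {d : measure_display} {T : measurableType d} {R : realType}.

Lemma chain_rep_setD (u : set T -> R) (I : set (set T)) C D : I C -> I D -> D `<=` C ->
  chain_rep u I (C `\` D) (u C - u D).
Proof.
move=> IC ID DC; exists 1%N, (fun=> C), (fun=> D); split => //.
- by apply/seteqP; split=> [w CDw|w [i _ //]]; exists 0%N.
- by rewrite big_ord1.
Qed.

Lemma in_J_setD (I : set (set T)) C D : I C -> I D -> D `<=` C -> in_J R I (C `\` D).
Proof. by move=> IC ID DC; eexists; exact: (chain_rep_setD (fun=> 0)). Qed.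

End chain_rep.

Section nested_chain.
Context {d : measure_display} {T : measurableType d}.
Variables (I0 : set (set T)) (E : (set T)^nat).
Hypotheses (I0S : in_Sigma I0) (mE : forall k, measurable (E k)).
Hypotheses (ndE : nondecreasing_seq E) (E0 : E 0%N = set0).

Local Notation B := (\bigcup_k E k).

Definition nested_chain : set (set T) :=
  [set X | (exists k C, I0 C /\ X = E k `|` (C `&` E k.+1)) \/
           (exists2 C, I0 C & X = B `|` (C `&` ~` B))].

Let E_sub {k m : nat} : (k <= m)%N -> E k `<=` E m.
Proof. by move=> /ndE; rewrite subsetEset. Qed.

Let I0set0 : I0 set0. Proof. by case: I0S. Qed.

Lemma nested_chainE k : nested_chain (E k).
Proof. by left; exists k, set0; rewrite set0I setU0. Qed.

Lemma nested_chain_bigcup : nested_chain B.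
Proof. by right; exists set0; rewrite ?set0I ?setU0. Qed.

Lemma nested_chain_measurable : nested_chain `<=` measurable.
Proof.
have mI0 : I0 `<=` measurable by case: I0S.
have mB : measurable B by exact: bigcupT_measurable.
move=> _ [[k [C [/mI0 mC ->]]]|[C /mI0 mC ->]].
  by apply: measurableU => //; exact: measurableI.
by apply: measurableU => //; apply: measurableI => //; exact: measurableC.
Qed.

Lemma nested_chain_total X Y : nested_chain X -> nested_chain Y ->
  X `<=` Y \/ Y `<=` X.
Proof.
have [_ I0tot _ _ _] := I0S.
have layer k C : E k `|` (C `&` E k.+1) `<=` E k.+1.
  by move=> w [/(E_sub (leqnSn k))|[]].
have below k C Z : E k.+1 `<=` Z -> E k `|` (C `&` E k.+1) `<=` Z.
  by move=> EY; apply: subset_trans (layer k C) EY.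
have EB k : E k `<=` B by move=> w Ekw; exists k.
move=> [[k [C [IC ->]]]|[C IC ->]] [[m [C' [IC' ->]]]|[C' IC' ->]].
- have [km|mk|<-] := ltngtP k m.
  + by left; apply: below => w /(E_sub km); left.
  + by right; apply: below => w /(E_sub mk); left.
  + by have [CC'|C'C] := I0tot _ _ IC IC'; [left|right]; apply: setUS; exact: setSI.
- by left; apply: below => w /EB; left.
- by right; apply: below => w /EB; left.
- by have [CC'|C'C] := I0tot _ _ IC IC'; [left|right]; apply: setUS; exact: setSI.
Qed.

Lemma sub_nested_chain_generated : I0 `<=` <<s nested_chain >>.
Proof.
pose G := g_sigma_algebraType nested_chain.
have GI X : nested_chain X -> <<s nested_chain >> X by exact: sub_gen_smallest.
move=> C IC.
have -> : C = \bigcup_k (C `&` (E k.+1 `\` E k)) `|` (C `&` ~` B).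
  by rewrite -setI_bigcupr bigcup_setD_succ // -setIUr setUv setIT.
apply: (@measurableU _ G).
  apply: (@bigcupT_measurable _ G) => k.
  have -> : C `&` (E k.+1 `\` E k) = (E k `|` (C `&` E k.+1)) `\` E k.
    by rewrite setDUl setDv set0U setIDA.
  by apply: (@measurableD _ G); apply: GI; [left; exists k, C|exact: nested_chainE].
have -> : C `&` ~` B = (B `|` (C `&` ~` B)) `\` B.
  by rewrite setDUl setDv set0U setDE -setIA setIid.
by apply: (@measurableD _ G); apply: GI; [right; exists C|exact: nested_chain_bigcup].
Qed.

Lemma in_Sigma_nested_chain : in_Sigma nested_chain.
Proof.
have [_ _ _ _ I0gen] := I0S.
split.
- exact: nested_chain_measurable.
- exact: nested_chain_total.
- by rewrite -E0; exact: nested_chainE.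
- by right; exists setT; [case: I0S|rewrite setTI setUv].
- apply/seteqP; split.
    apply: smallest_sub; first exact: sigma_algebra_measurable.
    exact: nested_chain_measurable.
  rewrite -I0gen; apply: smallest_sub sub_nested_chain_generated.
  exact: smallest_sigma_algebra.
Qed.

End nested_chain.

Section continuity_from_below.
Context {d : measure_display} {T : measurableType d} {R : realType}.
Variable v : set T -> R.
Hypotheses (Sigma_neq0 : exists I : set (set T), in_Sigma I) (vc : continuous_sf v).

Let cvg_nondecreasing0 (E : (set T)^nat) :
  (forall k, measurable (E k)) -> nondecreasing_seq E -> E 0%N = set0 ->
  v (E n) @[n --> \oo] --> v (\bigcup_n E n).
Proof.
move=> mE ndE E0; have [I0 I0S] := Sigma_neq0.
have IE := @nested_chainE _ _ I0 E I0S; have IB := @nested_chain_bigcup _ _ I0 E I0S.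
have I_set0 : nested_chain I0 E set0 by rewrite -E0.
have ndE1 k : E k `<=` E k.+1 by rewrite -subsetEset; exact: ndE.
have UA : \bigcup_k (E k.+1 `\` E k) = \bigcup_k E k `\` set0.
  by rewrite bigcup_setD_succ // setD0.
have := vc (in_Sigma_nested_chain I0S mE ndE E0)
  (fun k => in_J_setD (IE _) (IE _) (ndE1 k)) (trivIset_setD_succ ndE).
rewrite UA => /(_ _ _ (in_J_setD IB I_set0 (@sub0set _ _))
  (fun k => chain_rep_setD v (IE _) (IE _) (ndE1 k))
  (chain_rep_setD v IB I_set0 (@sub0set _ _))).
under eq_fun do rewrite -(big_mkord xpredT (fun k => v (E k.+1) - v (E k))).
under eq_fun do rewrite telescope_sumr // E0.
exact: cvg_subr_cst.
Qed.

Lemma continuous_sf_cvg_nondecreasing (E : (set T)^nat) :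
  (forall k, measurable (E k)) -> nondecreasing_seq E ->
  v (E n) @[n --> \oo] --> v (\bigcup_n E n).
Proof.
move=> mE ndE; pose E' n := if n is k.+1 then E k else set0.
have mE' k : measurable (E' k) by case: k => [|k]; [exact: measurable0|exact: mE].
have ndE' : nondecreasing_seq E'.
  apply/nondecreasing_seqP => -[|k] /=; last exact: ndE.
  by rewrite subsetEset; exact: sub0set.
have UE' : \bigcup_n E' n = \bigcup_n E n.
  apply/seteqP; split=> [w [[|k] _ //]|w [k _ Ekw]]; first by exists k.
  by exists k.+1.
by have := cvg_nondecreasing0 mE' ndE' erefl; rewrite UE' -cvg_shiftS.
Qed.

End continuity_from_below.

Section choquet_trunc.
Context {R : realType}.
Local Notation mu := (@lebesgue_measure R).
Implicit Types (phi psi : R -> R) (c y : R).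

(* [choquet v f l] is [choquet_trunc (fun z => v [set w | z < f w]) (v setT) y]
   converging to [l%:E] as [y --> -oo]. *)
Definition choquet_trunc phi c y : \bar R :=
  ((y * c)%:E + \int[mu]_(z in `[y, +oo[) (phi z)%:E)%E.

Lemma cvgn_integral_itvNy phi : (forall z, 0 <= phi z) -> measurable_fun setT phi ->
  (\int[mu]_(z in `[(- k%:R)%R, +oo[) (phi z)%:E)%E @[k --> \oo] -->
  (\int[mu]_z (phi z)%:E)%E.
Proof.
move=> phi0 mphi.
have -> : [set: R] = \bigcup_k `[(- k%:R)%R, +oo[%classic.
  apply/seteqP; split=> // z _.
  have [k _ /(_ _ (leqnn k)) /= zk] := cvgr_idn (nbhs_pinfty_ge (num_real (- z))).
  by exists k => //=; rewrite in_itv /= andbT lerNl.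
apply: ge0_nondecreasing_set_cvg_integral => [m n mn|k|k|k z _].
- rewrite subsetEset => z /=; rewrite !in_itv /= !andbT; apply: le_trans.
  by rewrite lerN2 ler_nat.
- exact: measurable_itv.
- by apply/measurable_EFinP; exact: measurable_funS mphi.
- by rewrite lee_fin.
Qed.

Lemma choquet_truncD phi psi c y : (forall z, 0 <= phi z) ->
  (forall z, phi z <= psi z) -> measurable_fun setT phi -> measurable_fun setT psi ->
  choquet_trunc psi c y =
    (choquet_trunc phi c y + \int[mu]_(z in `[y, +oo[) (psi z - phi z)%:E)%E.
Proof.
move=> phi0 phi_psi mphi mpsi; rewrite /choquet_trunc -addeA -ge0_integralD //.
- by congr (_ + _)%E; apply: eq_integral => z _; rewrite -EFinD subrKC.
- by move=> z _; rewrite lee_fin.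
- by apply/measurable_EFinP; exact: measurable_funS mphi.
- by move=> z _; rewrite lee_fin subr_ge0.
- by apply/measurable_EFinP; apply: measurable_funS (measurable_funB mpsi mphi).
Qed.

Lemma choquet_trunc_cvgB phi psi c a b : (forall z, 0 <= phi z) ->
  (forall z, phi z <= psi z) -> measurable_fun setT phi -> measurable_fun setT psi ->
  choquet_trunc phi c y @[y --> -oo] --> a%:E ->
  choquet_trunc psi c y @[y --> -oo] --> b%:E ->
  (b - a)%:E = (\int[mu]_z (psi z - phi z)%:E)%E.
Proof.
move=> phi0 phi_psi mphi mpsi ha hb.
pose D y := (\int[mu]_(z in `[y, +oo[) (psi z - phi z)%:E)%E.
have D_cvg : D y @[y --> -oo] --> (b - a)%:E.
  have /fine_cvgP[ha_fin _] := ha.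
  rewrite EFinB; apply: cvg_trans (cvgeB _ hb ha) => //; apply: near_eq_cvg.
  near=> y; rewrite (choquet_truncD c y phi0) // [(choquet_trunc phi c y + _)%E]addeC.
  by rewrite addeK //; near: y.
have psi_phi0 z : 0 <= psi z - phi z by rewrite subr_ge0.
have Dn_cvg : D (- k%:R) @[k --> \oo] --> (b - a)%:E.
  exact: cvg_comp ((cvgNrNy _).2 (@cvgr_idn R)) D_cvg.
exact: (cvg_unique (@ereal_hausdorff R) Dn_cvg
  (cvgn_integral_itvNy psi_phi0 (measurable_funB mpsi mphi))).
Unshelve. all: by end_near.
Qed.

Lemma choquet_trunc_nondecreasing_cvg (p : nat -> R -> R) (q : R -> R) c
    (a : nat -> R) b :
  (forall n z, 0 <= p n z) -> (forall n, measurable_fun setT (p n)) ->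
  measurable_fun setT q -> (forall z, nondecreasing_seq (p ^~ z)) ->
  (forall z, p n z @[n --> \oo] --> q z) ->
  (forall n, choquet_trunc (p n) c y @[y --> -oo] --> (a n)%:E) ->
  choquet_trunc q c y @[y --> -oo] --> b%:E ->
  a n @[n --> \oo] --> b.
Proof.
move=> p_ge0 mp mq ndp p_cvg ha hb.
have p_le_q n z : p n z <= q z.
  have := nondecreasing_cvgn_le (ndp z) (cvgP _ (p_cvg z)) n.
  by rewrite (cvg_lim _ (p_cvg z)).
have p0_le n z : p 0%N z <= p n z by exact: ndp.
have a_eq n := choquet_trunc_cvgB (p_ge0 0%N) (p0_le n) (mp 0%N) (mp n) (ha 0%N) (ha n).
have b_eq := choquet_trunc_cvgB (p_ge0 0%N) (p_le_q 0%N) (mp 0%N) mq (ha 0%N) hb.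
apply: (cvg_subr_cst (b := a 0%N)).
suff /fine_cvgP[_ //] : (a n - a 0%N)%:E @[n --> \oo] --> (b - a 0%N)%:E.
rewrite b_eq; under eq_fun do rewrite a_eq.
have -> : (fun z => (q z - p 0%N z)%:E) = fun z => limn (fun n => (p n z - p 0%N z)%:E).
  apply/funext => z; apply/esym/cvg_lim => //.
  by apply/fine_cvgP; split; [exact: nearW|exact: cvgB (p_cvg z) (cvg_cst _)].
apply: cvg_monotone_convergence => //.
- by move=> n; apply/measurable_EFinP; exact: measurable_funB (mp n) (mp 0%N).
- by move=> n z _; rewrite lee_fin subr_ge0.
- by move=> z _ m n mn; rewrite lee_fin lerD2r; exact: ndp.
Qed.

End choquet_trunc.

Section upper_level.
Context {d : measure_display} {T : measurableType d} {R : realType}.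
Variable v : set T -> R.

Definition upper_level (h : T -> R) (z : R) : R := v [set w | z < h w].

Lemma measurable_upper_set (h : T -> R) z : measurable_fun setT h ->
  measurable [set w | z < h w].
Proof.
by move=> mh; rewrite -preimage_itvoy -[X in measurable X]setTI; exact: mh.
Qed.

Hypothesis v_nd : nondecreasing_sf v.

Lemma le_upper_level (g h : T -> R) z : measurable_fun setT g -> measurable_fun setT h ->
  (forall w, g w <= h w) -> upper_level g z <= upper_level h z.
Proof.
move=> mg mh gh; apply: v_nd; [exact: measurable_upper_set..|].
by move=> w /= /lt_le_trans; apply.
Qed.

Lemma upper_level_ge0 (h : T -> R) z : v set0 = 0 -> measurable_fun setT h ->
  0 <= upper_level h z.
Proof.
move=> v0 mh; rewrite -v0; apply: v_nd => //; exact: measurable_upper_set.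
Qed.

Lemma measurable_upper_level (h : T -> R) : measurable_fun setT h ->
  measurable_fun setT (upper_level h).
Proof.
move=> mh; apply: nonincreasing_measurable => // y z yz.
apply: v_nd; [exact: measurable_upper_set..|].
by move=> w /=; apply: le_lt_trans.
Qed.

Lemma upper_level_cvg (fn : nat -> T -> R) (f : T -> R) (N : set T) z :
  (exists I : set (set T), in_Sigma I) -> continuous_sf v -> vnull v N ->
  (forall n, measurable_fun setT (fn n)) -> measurable_fun setT f ->
  (forall w, nondecreasing_seq (fn ^~ w)) ->
  (forall w, ~ N w -> fn n w @[n --> \oo] --> f w) ->
  upper_level (fn n) z @[n --> \oo] --> upper_level f z.
Proof.
move=> Sigma_neq0 vc [mN vN] mfn mf ndfn fn_cvg.
pose E n := ~` N `&` [set w | z < fn n w].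
have mE n : measurable (E n).
  by apply: measurableI; [exact: measurableC|exact: measurable_upper_set].
have ndE : nondecreasing_seq E.
  apply/nondecreasing_seqP => n; rewrite subsetEset => w [Nw zw]; split=> //.
  exact: lt_le_trans zw (ndfn w _ _ (leqnSn n)).
have UE : \bigcup_n E n = ~` N `&` [set w | z < f w].
  apply/seteqP; split=> [w [n _ [Nw zw]]|w [Nw zw]].
    split=> //=; apply: (lt_le_trans zw).
    have := nondecreasing_cvgn_le (ndfn w) (cvgP _ (fn_cvg w Nw)) n.
    by rewrite (cvg_lim _ (fn_cvg w Nw)).
  by have [n zn] := filter_ex (cvgr_gt _ (fn_cvg w Nw) _ zw); exists n.
rewrite /upper_level -(vN _ (measurable_upper_set _ mf)).2 -UE.
under eq_fun do rewrite -(vN _ (measurable_upper_set _ (mfn _))).2.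
exact: continuous_sf_cvg_nondecreasing.
Qed.

End upper_level.

Theorem theorem9 (d : measure_display) (T : measurableType d) (R : realType)
    (v : set T -> R) (fn : nat -> T -> R) (f : T -> R)
    (ln : nat -> R) (l : R) :
  (exists I : set (set T), in_Sigma I) ->
  nondecreasing_sf v -> continuous_sf v -> v set0 = 0 ->
  (forall n, measurable_fun setT (fn n)) -> measurable_fun setT f ->
  (forall n, choquet v (fn n) (ln n)) -> choquet v f l ->
  (forall n w, fn n w <= fn n.+1 w) ->
  (exists N, vnull v N /\ forall w, ~ N w -> fn n w @[n --> \oo] --> f w) ->
  ln n @[n --> \oo] --> l.
Proof.
move=> Sigma_neq0 v_nd vc v0 mfn mf choquet_fn choquet_f fn_step [N [vN fn_cvg]].
have ndfn w : nondecreasing_seq (fn ^~ w).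
  by apply/nondecreasing_seqP => n; exact: fn_step.
apply: (choquet_trunc_nondecreasing_cvg _ _ _ _ _ choquet_fn choquet_f).
- by move=> n z; exact: upper_level_ge0.
- by move=> n; exact: measurable_upper_level.
- exact: measurable_upper_level.
- by move=> z m n mn; apply: le_upper_level => // w; exact: ndfn.
- by move=> z; exact: upper_level_cvg fn_cvg.
Qed.
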